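(* Let $1<n\leq m$ and let $v\in Z_{n,m}$ with $h(v)<h_{n,m}$. Then $d(v,0)\leq d(u^{(0)},0)\leq D_{n,m}$.
   Context: Elements of $\mathbb{Z}_n$ are identified with representatives in $\{0,\dots,n-1\}$ (so $v_0,v_{m+1}$ are such integers in sums). $Z_{n,m}$ has vertices $u=(u_0,\dots,u_{m+1})\in\mathbb{Z}_n\times\{-1,0,1\}^m\times\mathbb{Z}_n$ with $\sum u_i\equiv0\pmod n$; $u,v$ adjacent if there is $0\leq i\leq m$ with $u_j=v_j$ for $j\notin\{i,i+1\}$ and either ($u_i=v_i+1$, $u_{i+1}=v_{i+1}-1$) or ($u_i=v_i-1$, $u_{i+1}=v_{i+1}+1$), arithmetic in coordinates $0,m+1$ in $\mathbb{Z}_n$. $d$ is graph distance, $0$ the all-zero vertex. $\operatorname{Piv}(v)$ is the set of integers $-1\le p\le m+1$ with $n\mid\sum_{i=0}^pv_i$ (empty sum $0$). $h(v)=\min\{|p-\frac m2|:p\in\operatorname{Piv}(v)\}$. $h_{n,m}=\frac n2$ if $2\mid(m-n)$ and $\frac{n+1}{2}$ otherwise. $u^{(0)}$ is the vertex with $u_i=1$ ($1\le i\le m$), $u_0\equiv-\lfloor\frac{m-n}2\rfloor\pmod n$; for $n<m$, $m-n$ odd, $u^{(1)}$ is the vertex with $u_{\lceil(m+1)/2\rceil}=0$, other $u_i=1$ ($1\le i\le m$), $u_0\equiv-\lfloor\frac{m-n}2\rfloor\pmod n$. $D_{n,m}=d(u^{(0)},0)$ if $2\mid(m-n)$ and $D_{n,m}=\max\{d(u^{(0)},0),d(u^{(1)},0)\}$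 otherwise. *)

From Stdlib Require Import ClassicalEpsilon.
From mathcomp Require Import all_boot all_order all_algebra.
Set Implicit Arguments. Unset Strict Implicit. Unset Printing Implicit Defensive.
Import Order.TTheory GRing.Theory Num.Theory.
Local Open Scope ring_scope.

(* A vertex u = (u_0,...,u_{m+1}) of Z_{n,m} is represented as a sequence of
   m+2 integers; u_0 and u_{m+1} are the representatives in {0,...,n-1}. *)
Definition is_vertex (n m : nat) (u : seq int) : Prop :=
  [/\ size u = m.+2,
      0 <= u`_0 < n%:Z, 0 <= u`_m.+1 < n%:Z,
      (forall i : nat, (1 <= i <= m)%N -> u`_i \in [:: -1; 0; 1]) &
      (n%:Z %| \sum_(i < m.+2) u`_i)%Z].

Definition eq_coord (n m j : nat) (a b : int) : Prop :=
  if (j == 0%N) || (j == m.+1) then (a %% n%:Z = b %% n%:Z)%Z else a = b.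

Definition adj (n m : nat) (u v : seq int) : Prop :=
  exists i : nat, (i <= m)%N /\
    (forall j : nat, (j < m.+2)%N -> j != i -> j != i.+1 -> u`_j = v`_j) /\
    ((eq_coord n m i u`_i (v`_i + 1) /\ eq_coord n m i.+1 u`_i.+1 (v`_i.+1 - 1))
     \/ (eq_coord n m i u`_i (v`_i - 1) /\ eq_coord n m i.+1 u`_i.+1 (v`_i.+1 + 1))).

Definition dist_le (n m : nat) (u v : seq int) (k : nat) : Prop :=
  exists p : seq (seq int),
    [/\ (size p <= k)%N,
        (forall w, w \in p -> is_vertex n m w),
        (forall i : nat, (i < size p)%N -> adj n m (nth u (u :: p) i) (nth u p i)) &
        last u p = v].

Definition dist_leb (n m : nat) (u v : seq int) (k : nat) : bool :=
  if excluded_middle_informative (dist_le n m u v k) then true else false.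

(* graph distance d(u,v) (the least k with a walk of length k; 0 by
   convention if no walk exists, which does not happen in Z_{n,m}) *)
Definition dist (n m : nat) (u v : seq int) : nat :=
  match excluded_middle_informative (exists k, dist_leb n m u v k) with
  | left H => ex_minn H
  | right _ => 0%N
  end.

Definition zero_vertex (m : nat) : seq int := nseq m.+2 0.

(* Piv(v) = { -1 <= p <= m+1 : n | sum_{i=0}^p v_i } *)
Definition Piv (n m : nat) (v : seq int) : seq int :=
  [seq (q%:Z - 1) | q <- iota 0 m.+3 & (n%:Z %| \sum_(i < q) v`_i)%Z].

(* h(v) = min { |p - m/2| : p in Piv(v) } ; -1 always lies in Piv(v), so
   using |-1 - m/2| as the seed of the fold does not change the minimum *)
Definition hv (n m : nat) (v : seq int) : rat :=
  \big[Num.min/ `|(-1)%:~R - m%:R / 2|]_(p <- Piv n m v) `|p%:~R - m%:R / 2|.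

Definition hnm (n m : nat) : rat :=
  if ~~ odd (m - n) then n%:R / 2 else (n%:R + 1) / 2.

Definition u0 (n m : nat) : seq int :=
  let a := ((- ((m - n)./2)%:Z) %% n%:Z)%Z in
  a :: nseq m 1 ++ [:: ((- (a + m%:Z)) %% n%:Z)%Z].

Definition u1 (n m : nat) : seq int :=
  let a := ((- ((m - n)./2)%:Z) %% n%:Z)%Z in
  let c := ((m.+2)./2)%N in
  a :: [seq (if i == c then 0 else 1) | i <- iota 1 m]
    ++ [:: ((- (a + (m%:Z - 1))) %% n%:Z)%Z].

Definition Dnm (n m : nat) : nat :=
  if ~~ odd (m - n) then dist n m (u0 n m) (zero_vertex m)
  else maxn (dist n m (u0 n m) (zero_vertex m)) (dist n m (u1 n m) (zero_vertex m)).

From mathcomp Require Import all_boot all_order all_algebra.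
From Stdlib Require Import ClassicalEpsilon.
From mathcomp Require Import zify lra.
Import Order.TTheory GRing.Theory Num.Theory.
Local Open Scope ring_scope.
Set Implicit Arguments. Unset Strict Implicit.

(* A vertex v is described by its partial sums T_v(p) = v_0 + ... + v_p,
   0 <= p <= m.  An edge of Z_{n,m} changes exactly one partial sum by +-1,
   up to a common shift of all of them by a multiple of n (the end coordinates
   live in Z_n).  Hence min { cost(v, c) : n | c }, where
   cost(v, c) = sum_p |T_v(p) - c|, changes by at most one along an edge and
   bounds d(v, 0) from below; conversely, moving a partial sum of maximal
   deviation towards c lowers cost(v, c) by one, so d(v, 0) <= cost(v, c)
   whenever n | c.
   If h(v) < h_{n,m}, some pivot p has n | T_v(p) and |2p - m| <= n - [m - n odd];
   as partial sums are 1-Lipschitz, cost(v, T_v(p)) <= sum_q |q - p|.  The partial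
   sums of u^(0) are u_0 + q, so cost(u^(0), c) = sum_q |q - (c - u_0)| with
   c - u_0 = floor((m - n)/2) mod n, which puts c - u_0 at least as far from
   m/2 as p; and sum_q |q - x| grows with |2x - m|. *)

Definition psum (v : seq int) (p : nat) : int := \sum_(j < p.+1) v`_j.

Definition cost (m : nat) (v : seq int) (c : int) : int :=
  \sum_(p < m.+1) `|psum v p - c|.

Definition reduce_coord (n m j : nat) (a : int) : int :=
  if (j == 0%N) || (j == m.+1) then (a %% n%:Z)%Z else a.

Definition move (n m i : nat) (d : int) (v : seq int) : seq int :=
  [seq reduce_coord n m j (v`_j + (if j == i then d else 0) - (if j == i.+1 then d else 0))
  | j <- iota 0 m.+2].

Lemma psum0 v : psum v 0 = v`_0.
Proof. by rewrite /psum big_ord1. Qed.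

Lemma psumS v p : psum v p.+1 = psum v p + v`_p.+1.
Proof. by rewrite /psum big_ord_recr. Qed.

Lemma cost_ge0 m v c : 0 <= cost m v c.
Proof. by apply: sumr_ge0 => p _; exact: normr_ge0. Qed.

Lemma cost_zero_vertex m : cost m (zero_vertex m) 0 = 0.
Proof.
rewrite /cost big1 // => p _; rewrite /psum big1 ?subrr ?normr0 // => j _.
by rewrite nth_nseq; case: ifP.
Qed.

Lemma sum_ord_pred1 (m i : nat) : (i <= m)%N ->
  \sum_(p < m.+1) (if p == i :> nat then 1 else 0 : int) = 1.
Proof. by move=> le_im; rewrite -big_mkcond (big_ord1_eq _ (fun=> 1)) ltnS le_im. Qed.

Lemma mem_N101 (x : int) : (x \in [:: -1; 0; 1]) = (`|x| <= 1).
Proof. by rewrite !inE; lia. Qed.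

Lemma dvdz_small (d c : int) : (d %| c)%Z -> 0 <= c < d -> c = 0.
Proof. by move=> /dvdz_mod0P c_mod0 /modz_small <-. Qed.

Lemma dvdz_modz_sub (d a : int) : (d %| (a %% d)%Z - a)%Z.
Proof. by rewrite -eqz_mod_dvd modz_mod. Qed.

Section Walks.
Variables (T : Type) (R : T -> T -> Prop).

Lemma walk_cons (x y : T) (p : seq T) :
  (forall i, (i < size (y :: p))%N -> R (nth x (x :: y :: p) i) (nth x (y :: p) i)) <->
  R x y /\ (forall i, (i < size p)%N -> R (nth y (y :: p) i) (nth y p i)).
Proof.
have nthE i : (i < size p)%N -> nth x (y :: p) i = nth y (y :: p) i /\ nth x p i = nth y p i.
  by move=> lt_ip; rewrite !(set_nth_default y x) //= ltnW.
split=> [walk | [Rxy walk] [|i] //= lt_ip]; first split; first exact: (walk 0%N).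
  by move=> i lt_ip; have [<- <-] := nthE i lt_ip; exact: (walk i.+1).
by have [-> ->] := nthE i lt_ip; exact: walk.
Qed.

End Walks.

Lemma dist_lebP n m u v k : reflect (dist_le n m u v k) (dist_leb n m u v k).
Proof. by rewrite /dist_leb; case: excluded_middle_informative => ?; constructor. Qed.

Lemma dist_le_bound n m u v k : dist_le n m u v k -> (dist n m u v <= k)%N.
Proof.
move=> walk; rewrite /dist; case: excluded_middle_informative => [ex|[]].
  by case: ex_minnP => k0 _; apply; apply/dist_lebP.
by exists k; apply/dist_lebP.
Qed.

Lemma dist_le_dist n m u v k : dist_le n m u v k -> dist_le n m u v (dist n m u v).
Proof.
move=> walk; rewrite /dist; case: excluded_middle_informative => [ex|[]].
  by case: ex_minnP => k0 /dist_lebP.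
by exists k; apply/dist_lebP.
Qed.

Lemma dist_le_cons n m u v w k : adj n m u w -> is_vertex n m w ->
  dist_le n m w v k -> dist_le n m u v k.+1.
Proof.
move=> adj_uw w_vertex [p [size_p p_vertex walk last_p]].
exists (w :: p); split=> //.
- by move=> x; rewrite inE => /predU1P [->|/p_vertex].
- exact/walk_cons.
Qed.

Lemma reduce_coordDl n m j a b :
  reduce_coord n m j (reduce_coord n m j a + b) = reduce_coord n m j (a + b).
Proof. by rewrite /reduce_coord; case: (_ || _) => //; rewrite modzDml. Qed.

Lemma eq_coordE n m j a b :
  eq_coord n m j a b <-> reduce_coord n m j a = reduce_coord n m j b.
Proof. by rewrite /eq_coord /reduce_coord; case: ifP. Qed.

Lemma reduce_coord_vertex n m v j : is_vertex n m v -> (j < m.+2)%N ->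
  reduce_coord n m j v`_j = v`_j.
Proof.
case=> _ v0_range vlast_range _ _ lt_j; rewrite /reduce_coord.
case: (altP eqP) => [->|_] /=; first exact: modz_small.
by case: eqP => [->|_]; rewrite ?modz_small.
Qed.

Lemma nth_move n m i d v j : (j < m.+2)%N ->
  (move n m i d v)`_j =
  reduce_coord n m j (v`_j + (if j == i then d else 0) - (if j == i.+1 then d else 0)).
Proof. by move=> lt_j; rewrite (nth_map 0%N) ?size_iota // nth_iota. Qed.

Lemma size_move n m i d v : size (move n m i d v) = m.+2.
Proof. by rewrite size_map size_iota. Qed.

Lemma nth_move_pair n m i d v : (i <= m)%N ->
  (move n m i d v)`_i = reduce_coord n m i (v`_i + d) /\
  (move n m i d v)`_i.+1 = reduce_coord n m i.+1 (v`_i.+1 - d).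
Proof.
move=> le_im; rewrite !nth_move ?ltnS ?leqW // eqxx (ltn_eqF (ltnSn i)) eqxx.
by rewrite (gtn_eqF (ltnSn i)) subr0 addr0.
Qed.

Lemma eq_coord_reduce n m j a e : eq_coord n m j a (reduce_coord n m j (a + e) - e).
Proof. by apply/eq_coordE; rewrite reduce_coordDl addrK. Qed.

Lemma reduce_coord_shift n m j a b e : eq_coord n m j a (b - e) ->
  reduce_coord n m j (a + e) = reduce_coord n m j b.
Proof. by move/eq_coordE => ab; rewrite -reduce_coordDl ab reduce_coordDl subrK. Qed.

Lemma adj_move n m i d v : is_vertex n m v -> (i <= m)%N -> `|d| = 1 ->
  adj n m v (move n m i d v).
Proof.
move=> v_vertex le_im d_unit; exists i; split=> //; split.
  move=> j lt_j ne_ji ne_jSi; rewrite nth_move // (negbTE ne_ji) (negbTE ne_jSi).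
  by rewrite addr0 subr0 reduce_coord_vertex.
have [move_i move_Si] := nth_move_pair n d v le_im.
have : eq_coord n m i v`_i ((move n m i d v)`_i - d) /\
       eq_coord n m i.+1 v`_i.+1 ((move n m i d v)`_i.+1 - - d).
  by rewrite move_i move_Si; split; apply: eq_coord_reduce.
have [->|->] : d = 1 \/ d = -1 by lia.
- by rewrite opprK; right.
- by rewrite opprK; left.
Qed.

Lemma move_of_adj n m x y : adj n m x y -> is_vertex n m y ->
  exists i d, [/\ (i <= m)%N, `|d| = 1 & y = move n m i d x].
Proof.
case=> i [le_im [agree coords]] y_vertex.
have [d [d_unit coord_i coord_Si]] : exists d, [/\ `|d| = 1,
    eq_coord n m i x`_i (y`_i - d) & eq_coord n m i.+1 x`_i.+1 (y`_i.+1 - - d)].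
  by case: coords => [[? ?]|[? ?]]; [exists (-1) | exists 1]; rewrite ?opprK.
exists i, d; split=> //.
have [size_y _ _ _ _] := y_vertex.
apply: (@eq_from_nth _ 0); first by rewrite size_move.
rewrite size_y => j lt_j; rewrite nth_move //.
have [eq_ji|ne_ji] := eqVneq j i.
  subst j; rewrite (ltn_eqF (ltnSn i)) subr0.
  by rewrite (reduce_coord_shift coord_i) reduce_coord_vertex.
have [eq_jSi|ne_jSi] := eqVneq j i.+1.
  subst j; rewrite addr0.
  by rewrite (reduce_coord_shift coord_Si) reduce_coord_vertex.
by rewrite addr0 subr0 agree // reduce_coord_vertex.
Qed.

Lemma psum_move n m i d v : exists2 e, (n%:Z %| e)%Z & forall p, (p <= m)%N ->
  psum (move n m i d v) p = psum v p + (if p == i then d else 0) + e.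
Proof.
set a := v`_0 + (if 0%N == i then d else 0).
exists ((a %% n%:Z)%Z - a); first exact: dvdz_modz_sub.
elim=> [|p IHp] le_pm.
  by rewrite !psum0 nth_move // /reduce_coord /= subr0 -/a addrCA subrr addr0.
rewrite !psumS IHp ?(ltnW le_pm) // nth_move; last by rewrite !ltnS; exact: ltnW.
rewrite /reduce_coord /= !eqSS (ltn_eqF le_pm).
by case: eqP; case: eqP; lia.
Qed.

Lemma move_vertex n m i d v : (0 < n)%N -> is_vertex n m v -> (i <= m)%N ->
  ((0 < i)%N -> `|v`_i + d| <= 1) -> ((i < m)%N -> `|v`_i.+1 - d| <= 1) ->
  is_vertex n m (move n m i d v).
Proof.
move=> n_gt0 v_vertex le_im ok_i ok_Si; have [_ _ _ v_mid v_sum] := v_vertex.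
have reduce_range j a : (j == 0%N) || (j == m.+1) -> 0 <= reduce_coord n m j a < n%:Z.
  by move=> end_j; rewrite /reduce_coord end_j modz_ge0 ?ltz_pmod //; lia.
split.
- exact: size_move.
- by rewrite nth_move //; apply: reduce_range.
- by rewrite nth_move //; apply: reduce_range; rewrite eqxx orbT.
- move=> j /andP [j_gt0 le_jm]; rewrite nth_move; last exact: leqW.
  rewrite /reduce_coord (gtn_eqF j_gt0) (ltn_eqF (le_jm : (j < m.+1)%N)) mem_N101 /=.
  have [eq_ji|ne_ji] := eqVneq j i; first by subst j; rewrite (ltn_eqF (ltnSn i)) subr0 ok_i.
  have [eq_jSi|ne_jSi] := eqVneq j i.+1; first by subst j; rewrite addr0 ok_Si.
  by rewrite addr0 subr0 -mem_N101 v_mid ?j_gt0.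
- have [e dvd_e psum_e] := psum_move n m i d v.
  rewrite (_ : \sum_(j < m.+2) _ = psum (move n m i d v) m.+1) //.
  rewrite psumS psum_e // nth_move // /reduce_coord eqxx orbT (gtn_eqF (le_im : (i < m.+1)%N)) eqSS.
  set x := v`_m.+1 + 0 - _.
  have -> : psum v m + (if m == i then d else 0) + e + (x %% n%:Z)%Z =
            psum v m.+1 + e + ((x %% n%:Z)%Z - x) by rewrite psumS /x; case: eqP; lia.
  by apply: rpredD; [exact: rpredD | exact: dvdz_modz_sub].
Qed.

Lemma cost_move n m i d v c : `|d| = 1 -> (i <= m)%N -> (n%:Z %| c)%Z ->
  exists2 c', (n%:Z %| c')%Z & cost m v c' <= cost m (move n m i d v) c + 1.
Proof.
move=> d_unit le_im dvd_c; have [e dvd_e psum_e] := psum_move n m i d v.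
exists (c - e); first exact: rpredB.
rewrite /cost -(sum_ord_pred1 le_im) -big_split /=; apply: ler_sum => p _.
rewrite psum_e; last by rewrite -ltnS.
by case: eqP => _; lia.
Qed.

Lemma cost_descent n m v c : (0 < n)%N -> is_vertex n m v -> (n%:Z %| c)%Z ->
  cost m v c != 0 -> exists w c',
  [/\ is_vertex n m w, adj n m v w, (n%:Z %| c')%Z & cost m w c' = cost m v c - 1].
Proof.
move=> n_gt0 v_vertex dvd_c cost_neq0; have [_ _ _ v_mid _] := v_vertex.
have [i' _ max_i'] := @arg_maxnP _ ord0 xpredT (fun p : 'I_m.+1 => `|psum v p - c|%N) isT.
have le_im : (i' <= m)%N by rewrite -ltnS.
move: (nat_of_ord i') le_im max_i' => i le_im max_i'.
have max_i p : (p <= m)%N -> `|psum v p - c| <= `|psum v i - c|.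
  by move=> le_pm; have := max_i' (Ordinal (le_pm : (p < m.+1)%N)) isT.
have psum_i_neq : psum v i <> c.
  move=> psum_i; move/eqP: cost_neq0; apply; rewrite /cost big1 // => p _.
  by have := max_i p (ltn_ord p); rewrite psum_i subrr normr0; lia.
(* Moving a partial sum of maximal deviation towards c keeps the neighbouring
   increments in {-1, 0, 1}. *)
pose d : int := if c < psum v i then -1 else 1.
have d_unit : `|d| = 1 by rewrite /d; case: ifP.
have [e dvd_e psum_e] := psum_move n m i d v.
exists (move n m i d v), (c + e); split.
- apply: move_vertex => // [i_gt0 | lt_im].
  + have mid_i : `|v`_i| <= 1 by rewrite -mem_N101 v_mid // i_gt0 le_im.
    have := max_i i.-1 (leq_trans (leq_pred i) le_im).
    have := psumS v i.-1; rewrite prednK // /d; case: ifP; lia.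
  + have mid_Si : `|v`_i.+1| <= 1 by rewrite -mem_N101 v_mid.
    have := max_i i.+1 lt_im.
    have := psumS v i; rewrite /d; case: ifP; lia.
- exact: adj_move.
- exact: rpredD.
- rewrite /cost -(sum_ord_pred1 le_im) -sumrB; apply: eq_bigr => p _.
  rewrite psum_e; last by rewrite -ltnS.
  by case: eqP => [pi|_]; [rewrite pi /d; case: ifP |]; lia.
Qed.

Lemma cost_eq0 n m v c : is_vertex n m v -> (n%:Z %| c)%Z -> cost m v c = 0 ->
  v = zero_vertex m.
Proof.
case=> size_v v0_range vlast_range _ v_sum dvd_c cost0.
have psum_c p : (p <= m)%N -> psum v p = c.
  move=> le_pm; apply/eqP; rewrite -subr_eq0 -normr_eq0; apply/eqP.
  have := psumr_eq0P (fun (j : 'I_m.+1) _ => normr_ge0 (psum v j - c)) cost0.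
  by move=> /(_ (Ordinal (le_pm : (p < m.+1)%N)) isT).
have c0 : c = 0 by apply: (dvdz_small dvd_c); rewrite -(psum_c 0%N) // psum0.
have vlast0 : v`_m.+1 = 0.
  apply: (dvdz_small (d := n%:Z)) => //.
  by rewrite (_ : v`_m.+1 = psum v m.+1) // psumS psum_c // c0 add0r.
apply: (@eq_from_nth _ 0); first by rewrite size_v size_nseq.
rewrite size_v => j lt_j; rewrite nth_nseq lt_j.
case: j lt_j => [|j] lt_j; first by rewrite -psum0 psum_c.
have [lt_jm|le_mj] := ltnP j m.
  by have := psumS v j; rewrite (psum_c j.+1 lt_jm) (psum_c j (ltnW lt_jm)) c0; lia.
by have -> : j = m by lia.
Qed.

Lemma dist_le_cost n m v c : (0 < n)%N -> is_vertex n m v -> (n%:Z %| c)%Z ->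
  dist_le n m v (zero_vertex m) `|cost m v c|%N.
Proof.
move=> n_gt0; move Ecost: `|cost m v c|%N => N.
elim: N v c Ecost => [|N IHN] v c Ecost v_vertex dvd_c.
  have cost0 : cost m v c = 0 by apply/eqP; rewrite -absz_eq0 Ecost.
  by rewrite (cost_eq0 v_vertex dvd_c cost0); exists [::].
have [|w [c' [w_vertex adj_vw dvd_c' cost_w]]] := cost_descent n_gt0 v_vertex dvd_c.
  by rewrite -absz_eq0 Ecost.
apply: dist_le_cons adj_vw w_vertex (IHN w c' _ w_vertex dvd_c').
by move: Ecost; rewrite cost_w; have := cost_ge0 m v c; lia.
Qed.

Lemma cost_le_dist_le n m u k : dist_le n m u (zero_vertex m) k ->
  exists2 c, (n%:Z %| c)%Z & cost m u c <= k%:Z.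
Proof.
case=> p [size_p p_vertex walk last_p].
suff [c dvd_c cost_le] : exists2 c, (n%:Z %| c)%Z & cost m u c <= (size p)%:Z.
  by exists c => //; apply: le_trans cost_le _; rewrite lez_nat.
elim: p u p_vertex walk last_p {size_p} => [|y p IHp] u p_vertex walk /= last_p.
  by exists 0; rewrite ?dvdz0 // last_p cost_zero_vertex.
move/walk_cons: walk => [adj_uy walk_y].
have y_vertex : is_vertex n m y by apply: p_vertex; rewrite mem_head.
have [c dvd_c cost_y] : exists2 c, (n%:Z %| c)%Z & cost m y c <= (size p)%:Z.
  by apply: IHp => // w w_p; apply: p_vertex; rewrite inE w_p orbT.
have [i [d [le_im d_unit y_move]]] := move_of_adj adj_uy y_vertex.
have [c' dvd_c' cost_u] := cost_move u d_unit le_im dvd_c.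
by exists c' => //; move: cost_y; rewrite y_move; lia.
Qed.

Definition absdev (m : nat) (q : int) : int := \sum_(p < m.+1) `|p%:Z - q|.

Lemma absdev_closed m (q : nat) : (q <= m)%N ->
  4 * absdev m q = (2 * q%:Z - m%:Z) ^+ 2 + m%:Z ^+ 2 + 2 * m%:Z.
Proof.
elim: m q => [|m IHm] q le_qm.
  have -> : q = 0%N by lia.
  by rewrite /absdev big_ord1.
rewrite /absdev big_ord_recr /= -/(absdev m q).
have [le_qm'|lt_mq] := leqP q m; first by have := IHm q le_qm'; nia.
have -> : q = m.+1 by lia.
have -> : absdev m m.+1 = absdev m m + m.+1%:Z.
  rewrite /absdev (eq_bigr (fun p : 'I_m.+1 => `|p%:Z - m%:Z| + 1)).
    by rewrite big_split /= sumr_const card_ord natz.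
  by move=> p _; have := ltn_ord p; lia.
rewrite subrr normr0 addr0 mulrDr (IHm m (leqnn m)); nia.
Qed.

Lemma absdev_mono m (p : nat) (q : int) : (p <= m)%N ->
  `|2 * p%:Z - m%:Z| <= `|2 * q - m%:Z| -> absdev m p <= absdev m q.
Proof.
move=> le_pm le_pq.
have mono_nat (k : nat) : (k <= m)%N -> `|2 * p%:Z - m%:Z| <= `|2 * k%:Z - m%:Z| ->
    absdev m p <= absdev m k.
  move=> le_km le_pk; rewrite -(ler_pM2l (_ : 0 < 4)) // !absdev_closed //.
  rewrite !lerD2r -[X in X <= _]real_normK ?num_real // -[X in _ <= X]real_normK ?num_real //.
  by rewrite ler_sqr ?nnegrE.
have [q_lt0|q_ge0] := ltP q 0.
  apply: le_trans (mono_nat 0%N _ _) _ => //; first by lia.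
  by apply: ler_sum => j _; lia.
have [m_lt_q|q_le_m] := ltP m%:Z q.
  apply: le_trans (mono_nat m _ _) _ => //; first by lia.
  by apply: ler_sum => j _; have := ltn_ord j; lia.
have [k qE] : exists k : nat, q = k%:Z by exists `|q|%N; lia.
subst q.
by apply: mono_nat => //; lia.
Qed.

Lemma psum_lipschitz (v : seq int) (p q : nat) :
  (forall j, (p < j <= q)%N -> `|v`_j| <= 1) -> (p <= q)%N ->
  `|psum v q - psum v p| <= (q - p)%:Z.
Proof.
elim: q => [|q IHq] unit_v le_pq.
  have -> : p = 0%N by lia.
  by rewrite subrr normr0.
have [le_pq'|lt_qp] := leqP p q; last first.
  have -> : p = q.+1 by lia.
  by rewrite subrr normr0 subnn.
have IH : `|psum v q - psum v p| <= (q - p)%:Z.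
  by apply: IHq => // j /andP [lt_pj le_jq]; apply: unit_v; rewrite lt_pj leqW.
have := unit_v q.+1; rewrite ltnS le_pq' leqnn => /(_ isT).
by rewrite psumS; lia.
Qed.

Lemma cost_le_absdev n m v p : is_vertex n m v -> (p <= m)%N ->
  cost m v (psum v p) <= absdev m p.
Proof.
case=> _ _ _ v_mid _ le_pm.
have lip q1 q2 : (q1 <= q2 <= m)%N -> `|psum v q2 - psum v q1| <= (q2 - q1)%:Z.
  move=> /andP [le_12 le_2m]; apply: psum_lipschitz => // j lt_1j2.
  by rewrite -mem_N101 v_mid //; lia.
apply: ler_sum => j _; have le_jm : (j <= m)%N by rewrite -ltnS.
have [le_pj|lt_jp] := leqP p j.
  by have := lip p j; rewrite le_pj le_jm; lia.
by have := lip j p; rewrite (ltnW lt_jp) le_pm; lia.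
Qed.

Lemma nth_u0 n m j : (0 < j <= m)%N -> (u0 n m)`_j = 1.
Proof.
by case: j => [|j] // /andP [_ lt_jm]; rewrite /u0 /= nth_cat size_nseq lt_jm nth_nseq lt_jm.
Qed.

Lemma psum_u0 n m p : (p <= m)%N -> psum (u0 n m) p = (u0 n m)`_0 + p%:Z.
Proof.
elim: p => [|p IHp] le_pm; first by rewrite psum0 addr0.
by rewrite psumS IHp ?(ltnW le_pm) // (@nth_u0 n m p.+1) ?le_pm //; lia.
Qed.

Lemma u0_vertex n m : (0 < n)%N -> is_vertex n m (u0 n m).
Proof.
move=> n_gt0; have range a : 0 <= (a %% n%:Z)%Z < n%:Z.
  by rewrite modz_ge0 ?ltz_pmod //; lia.
have u0_last : (u0 n m)`_m.+1 = ((- ((u0 n m)`_0 + m%:Z)) %% n%:Z)%Z.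
  by rewrite /u0 /= nth_cat size_nseq ltnn subnn.
split.
- by rewrite /u0 /= size_cat size_nseq addn1.
- exact: range.
- by rewrite u0_last.
- by move=> j le_jm; rewrite nth_u0.
- rewrite (_ : \sum_(j < m.+2) _ = psum (u0 n m) m.+1) // psumS psum_u0 // u0_last.
  by rewrite addrC -[X in _ + X]opprK dvdz_modz_sub.
Qed.

Lemma cost_u0 n m c : cost m (u0 n m) c = absdev m (c - (u0 n m)`_0).
Proof.
apply: eq_bigr => p _; rewrite psum_u0; last by rewrite -ltnS.
lia.
Qed.

Lemma u0_offset_mod n m c : (n%:Z %| c)%Z ->
  (c - (u0 n m)`_0 = ((m - n)./2)%:Z %[mod n%:Z])%Z.
Proof.
set r := ((m - n)./2)%:Z => dvd_c; apply/eqP; rewrite eqz_mod_dvd.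
have -> : c - (u0 n m)`_0 - r = c - (((- r) %% n%:Z)%Z - - r).
  by rewrite /u0 /= -/r; lia.
by rewrite rpredB // dvdz_modz_sub.
Qed.

Lemma far_from_middle (n m : nat) (q : int) : (n <= m)%N ->
  (q = ((m - n)./2)%:Z %[mod n%:Z])%Z -> n%:Z - (odd (m - n))%:Z <= `|2 * q - m%:Z|.
Proof.
move=> le_nm /eqP; rewrite eqz_mod_dvd => /dvdzP [t qE].
have := odd_double_half (m - n); rewrite -muln2 => mnE.
have : n%:Z <= t * n%:Z \/ t * n%:Z <= 0 by have [] := ltP 0 t; [left | right]; nia.
by move: qE mnE; case: odd => /=; lia.
Qed.

Lemma hnmE n m : hnm n m = (n + odd (m - n))%:R / 2.
Proof. by rewrite /hnm; case: odd => /=; rewrite ?addn0 // natrD. Qed.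

Lemma ltr_norm_half (p : int) (m N : nat) :
  `|p%:~R - m%:R / 2| < N%:R / 2 :> rat -> `|2 * p - m%:Z| < N%:Z.
Proof.
rewrite !ltr_norml -!(ltr_int rat) => /andP [lo hi].
by rewrite rmorphN rmorphB rmorphM /= !pmulrn; apply/andP; split; lra.
Qed.

Lemma pivot_near_middle n m v : (n <= m)%N -> hv n m v < hnm n m ->
  exists p, [/\ (p <= m)%N, (n%:Z %| psum v p)%Z &
                `|2 * p%:Z - m%:Z| <= n%:Z - (odd (m - n))%:Z].
Proof.
rewrite hnmE => le_nm hv_lt.
have : has (fun p : int => `|p%:~R - m%:R / 2| < (n + odd (m - n))%:R / 2 :> rat) (Piv n m v).
  apply: contraTT hv_lt => /hasPn far; rewrite -leNgt /hv big_seq; apply: le_bigmin => [|p /far].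
    by rewrite leNgt; apply/negP => /ltr_norm_half; lia.
  by rewrite leNgt.
case/hasP => p /mapP [q]; rewrite mem_filter mem_iota => /andP [dvd_q q_range] ->.
move=> /ltr_norm_half near_q; have := odd_double_half (m - n); rewrite -muln2 => mnE.
exists q.-1; split; [lia | by rewrite /psum prednK //; lia | lia].
Qed.

Unset Implicit Arguments.

Theorem lemma5p24 (n m : nat) (v : seq int) :
  (1 < n)%N -> (n <= m)%N -> is_vertex n m v -> hv n m v < hnm n m ->
  (dist n m v (zero_vertex m) <= dist n m (u0 n m) (zero_vertex m))%N /\
  (dist n m (u0 n m) (zero_vertex m) <= Dnm n m)%N.
Proof.
move=> n_gt1 le_nm v_vertex hv_lt; split; last first.
  by rewrite /Dnm; case: ifP => _; rewrite ?leq_maxl.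
have n_gt0 := ltnW n_gt1.
have [p [le_pm dvd_p near_p]] := pivot_near_middle le_nm hv_lt.
have [c dvd_c cost_u0_le] :=
  cost_le_dist_le (dist_le_dist (dist_le_cost n_gt0 (u0_vertex m n_gt0) (dvdz0 n))).
apply: leq_trans (dist_le_bound (dist_le_cost n_gt0 v_vertex dvd_p)) _.
have v_le_absdev := cost_le_absdev v_vertex le_pm.
have absdev_le : absdev m p <= cost m (u0 n m) c.
  rewrite cost_u0; apply: absdev_mono => //.
  by apply: le_trans near_p _; exact: far_from_middle le_nm (u0_offset_mod m dvd_c).
by have := cost_ge0 m v (psum v p); lia.
Qed.
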